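(* In the parallel-links routing game with standard costs described in the context, the $N$-player bargaining problem $(\mathcal G,\hat{\mathbf J})$ need not be essential: there exist instances in which the NBS cost vector coincides with the NEP cost vector. Moreover, the Price of Selfishness (hence also the Price of Anarchy) can be arbitrarily large: for every $K>0$ there is an instance with standard costs such that $PoS\ge K$.
   Context: Parallel-links routing game: users $\mathcal N=\{1,\dots,N\}$ share parallel links $\mathcal L=\{1,\dots,L\}$ from a common source to a common destination. User $i$ has demand $r^i>0$. A routing strategy of user $i$ is $\mathbf f^i=(f^i_l)_l$ with $f^i_l\ge0$, $\sum_lf^i_l=r^i$; feasible profiles form $\mathbf F$; $f_l=\sum_if^i_l$. Standard costs: $J^i(\mathbf f)=\sum_lJ^i_l(f^i_l,f_l)$ where each $J^i_l:[0,\infty)^2\to[0,\infty)$ is continuous, increasing in each argument, convex and continuously differentiable in $f^i_l$, and whenever $J^i_l$ is finite, $\partial J^i_l/\partial f^i_l(f^i_l,f_l)$ is strictly increasing in each argument. NEP: a feasible $\hat{\mathbf f}$ such that each $\hat{\mathbf f}^i$ minimizes $J^i$ over user $i$'s feasible strategies given the others'; with standard costs it exists and is unique. $\hat J^i=J^i(\hat{\mathbf f})$, $\hat J_{sys}=\sum_i\hat J^i$. Social cost $J_{sys}=\sum_iJ^i$; $J^*_{sys}$ its minimum over $\mathbf F$; $PoA=\hat J_{sys}/J^*_{sys}$. Bargaining: $\mathcal G$ is the set of all vectors $\sum_{m=1}^Mp_m(J^1(\mathbf f(m)),\dots,J^N(\mathbf f(m)))$ with $M$ finite, $p_m>0$,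 $\sum_mp_m=1$, $\mathbf f(m)\in\mathbf F$. The problem is essential if some $\mathbf g\in\mathcal G$ has $g^i<\hat J^i$ for all $i$. The NBS is the unique $\tilde{\mathbf g}$ maximizing $\prod_i(\hat J^i-g^i)$ over $\mathbf g\in\mathcal G$ with $g^i\le\hat J^i$ for all $i$. $PoS=(\sum_i\tilde g^i)/J^*_{sys}$. *)

From Stdlib Require Import Reals.
From Coquelicot Require Import Coquelicot.
From mathcomp Require Import ssreflect ssrfun ssrbool eqtype ssrnat seq fintype bigop.

Set Implicit Arguments.
Unset Strict Implicit.
Unset Printing Implicit Defensive.

Local Open Scope R_scope.

Notation "\rsum_ ( i < n ) F" := (\big[Rplus/0%R]_(i < n) F)
  (at level 41, F at level 41, i, n at level 50).
Notation "\rprod_ ( i < n ) F" := (\big[Rmult/1%R]_(i < n) F)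
  (at level 36, F at level 36, i, n at level 50).

(* Standard link costs  J : [0,oo)^2 -> [0,oo),  (x, y) = (f^i_l, f_l) *)

Definition has_derivative_on_nonneg (g dg : R -> R) : Prop :=
  forall x, 0 <= x ->
    filterlim (fun h => (g (x + h) - g x) / h)
      (within (fun h => h <> 0 /\ 0 <= x + h) (locally 0))
      (locally (dg x)).

Definition continuous_on_nonneg (g : R -> R) : Prop :=
  forall x, 0 <= x ->
    filterlim g (within (fun t => 0 <= t) (locally x)) (locally (g x)).

Definition standard_link_cost (J : R -> R -> R) : Prop :=
  (forall x y, 0 <= x -> 0 <= y -> 0 <= J x y) /\
  (forall x y, 0 <= x -> 0 <= y ->
     filterlim (fun p : R * R => J (fst p) (snd p))
       (within (fun p : R * R => 0 <= fst p /\ 0 <= snd p) (locally (x, y)))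
       (locally (J x y))) /\
  (forall x x' y, 0 <= x -> x <= x' -> 0 <= y -> J x y <= J x' y) /\
  (forall x y y', 0 <= x -> 0 <= y -> y <= y' -> J x y <= J x y') /\
  (forall y a b t, 0 <= y -> 0 <= a -> 0 <= b -> 0 <= t <= 1 ->
     J ((1 - t) * a + t * b) y <= (1 - t) * J a y + t * J b y) /\
  (exists dJ : R -> R -> R,
     (forall y, 0 <= y ->
        has_derivative_on_nonneg (fun x => J x y) (fun x => dJ x y) /\
        continuous_on_nonneg (fun x => dJ x y)) /\
     (forall x x' y, 0 <= x -> x < x' -> 0 <= y -> dJ x y < dJ x' y) /\
     (forall x y y', 0 <= x -> 0 <= y -> y < y' -> dJ x y < dJ x y')).

Definition profile (N L : nat) := 'I_N -> 'I_L -> R.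

Definition standard_costs (N L : nat) (J : 'I_N -> 'I_L -> R -> R -> R) : Prop :=
  forall i l, standard_link_cost (J i l).

Definition feasible (N L : nat) (r : 'I_N -> R) (f : profile N L) : Prop :=
  (forall i l, 0 <= f i l) /\ (forall i, \rsum_(l < L) f i l = r i).

Definition link_flow (N L : nat) (f : profile N L) (l : 'I_L) : R :=
  \rsum_(i < N) f i l.

Definition user_cost (N L : nat) (J : 'I_N -> 'I_L -> R -> R -> R)
  (f : profile N L) (i : 'I_N) : R :=
  \rsum_(l < L) J i l (f i l) (link_flow f l).

Definition sys_cost (N L : nat) (J : 'I_N -> 'I_L -> R -> R -> R)
  (f : profile N L) : R :=
  \rsum_(i < N) user_cost J f i.

Definition is_NEP (N L : nat) (r : 'I_N -> R) (J : 'I_N -> 'I_L -> R -> R -> R)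
  (f : profile N L) : Prop :=
  feasible r f /\
  forall (i : 'I_N) (g : profile N L),
    feasible r g -> (forall j l, j <> i -> g j l = f j l) ->
    user_cost J f i <= user_cost J g i.

Definition is_social_opt (N L : nat) (r : 'I_N -> R)
  (J : 'I_N -> 'I_L -> R -> R -> R) (f : profile N L) : Prop :=
  feasible r f /\ forall g, feasible r g -> sys_cost J f <= sys_cost J g.

Definition in_G (N L : nat) (r : 'I_N -> R) (J : 'I_N -> 'I_L -> R -> R -> R)
  (g : 'I_N -> R) : Prop :=
  exists (M : nat) (p : 'I_M -> R) (fs : 'I_M -> profile N L),
    (forall m, 0 < p m) /\ \rsum_(m < M) p m = 1 /\
    (forall m, feasible r (fs m)) /\
    (forall i, g i = \rsum_(m < M) p m * user_cost J (fs m) i).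

Definition essential (N L : nat) (r : 'I_N -> R) (J : 'I_N -> 'I_L -> R -> R -> R)
  (Jhat : 'I_N -> R) : Prop :=
  exists g, in_G r J g /\ forall i, g i < Jhat i.

Definition nash_product (N : nat) (Jhat g : 'I_N -> R) : R :=
  \rprod_(i < N) (Jhat i - g i).

Definition is_NBS (N L : nat) (r : 'I_N -> R) (J : 'I_N -> 'I_L -> R -> R -> R)
  (Jhat g : 'I_N -> R) : Prop :=
  in_G r J g /\ (forall i, g i <= Jhat i) /\
  (forall h, in_G r J h -> (forall i, h i <= Jhat i) ->
     nash_product Jhat h <= nash_product Jhat g) /\
  (forall h, in_G r J h -> (forall i, h i <= Jhat i) ->
     nash_product Jhat h = nash_product Jhat g -> forall i, h i = g i).

From Stdlib Require Import Reals Lra Psatz.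
From Coquelicot Require Import Coquelicot.
From HB Require Import structures.
From mathcomp Require Import ssreflect ssrfun ssrbool eqtype ssrnat seq fintype bigop.

(* Two users share two links. User 0 (demand 2) pays at least 8 on every
   feasible profile, with equality only when it uses link 0 alone and user 1
   stays off link 0; that is the equilibrium, where user 1 is left with the
   expensive link 1 and pays M. Hence the only point of the bargaining set G
   weakly below the Nash costs is the Nash cost vector itself: the problem is
   not essential and the NBS is the Nash cost vector, of total 8 + M.  If the
   users swap links the social cost is 26, and a steep congestion penalty on
   link 0 for user 1 makes this the social optimum once M >= 100, so
   PoS = PoA = (8 + M) / 26 is unbounded. *)

Set Implicit Arguments.
Unset Strict Implicit.

Local Open Scope R_scope.

Lemma RplusA : associative Rplus. Proof. by move=> a b c; ring. Qed.
HB.instance Definition _ := Monoid.isComLaw.Build R 0 Rplus RplusA Rplus_comm Rplus_0_l.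

Lemma rsum_mulr n (p : 'I_n -> R) c :
  \rsum_(m < n) (p m * c) = (\rsum_(m < n) p m) * c.
Proof.
elim: n p => [|n IH] p; first by rewrite !big_ord0 Rmult_0_l.
by rewrite !big_ord_recr /= IH Rmult_plus_distr_r.
Qed.

Lemma rsum_ge0 n (P : pred 'I_n) (F : 'I_n -> R) :
  (forall m, 0 <= F m) -> 0 <= \big[Rplus/0]_(m < n | P m) F m.
Proof. by move=> F_ge0; apply: big_ind => //; [lra | move=> a b; lra]. Qed.

Lemma rsum_ge0_eq0 n (F : 'I_n -> R) :
  (forall m, 0 <= F m) -> \rsum_(m < n) F m <= 0 -> forall m, F m = 0.
Proof.
move=> F_ge0 + m; rewrite (bigD1 m) //=; set rest := \big[Rplus/0]_(i < n | _) _.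
have rest_ge0 : 0 <= rest := rsum_ge0 _ F_ge0.
by have := F_ge0 m; lra.
Qed.

Lemma convex_comb_const n (p : 'I_n -> R) c :
  \rsum_(m < n) p m = 1 -> \rsum_(m < n) (p m * c) = c.
Proof. by move=> p1; rewrite rsum_mulr p1 Rmult_1_l. Qed.

Lemma convex_comb_ge_eq n (p : 'I_n -> R) (u : 'I_n -> R) a :
  (forall m, 0 < p m) -> \rsum_(m < n) p m = 1 -> (forall m, a <= u m) ->
  \rsum_(m < n) (p m * u m) <= a -> forall m, u m = a.
Proof.
move=> p_gt0 p1 a_le_u comb_le m.
have terms_ge0 j : 0 <= p j * (u j - a).
  by apply: Rmult_le_pos; [apply: Rlt_le | have := a_le_u j; lra].
have : \rsum_(j < n) (p j * (u j - a)) <= 0.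
  have -> : \rsum_(j < n) (p j * (u j - a)) =
            \rsum_(j < n) (p j * u j) + \rsum_(j < n) (p j * - a).
    by rewrite -big_split; apply: eq_bigr => j _ /=; ring.
  rewrite convex_comb_const //; lra.
move/(rsum_ge0_eq0 terms_ge0)/(_ m)/Rmult_integral => [pm0|]; last lra.
by have := p_gt0 m; lra.
Qed.

Section Bargaining.
Variables (N L : nat) (r : 'I_N -> R) (J : 'I_N -> 'I_L -> R -> R -> R).
Variable Jhat : 'I_N -> R.
Hypothesis Jhat_in_G : in_G r J Jhat.
Hypothesis below_Jhat_eq :
  forall h, in_G r J h -> (forall i, h i <= Jhat i) -> forall i, h i = Jhat i.

Lemma in_G_user_cost f : feasible r f -> in_G r J (user_cost J f).
Proof.
move=> f_feas; exists 1%N, (fun _ => 1), (fun _ => f).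
split; [by move=> _; lra | split; [by rewrite big_ord1 | split => // i]].
by rewrite big_ord1 Rmult_1_l.
Qed.

Lemma not_essential_of_below_eq (i0 : 'I_N) : ~ essential r J Jhat.
Proof.
move=> [g [g_in_G g_lt]].
have := below_Jhat_eq g_in_G (fun i => Rlt_le _ _ (g_lt i)) i0.
by have := g_lt i0; lra.
Qed.

Lemma is_NBS_of_below_eq : is_NBS r J Jhat Jhat.
Proof.
split=> //; split; first by move=> i; lra.
split=> [h h_in_G h_le | h h_in_G h_le _]; last exact: below_Jhat_eq.
rewrite /nash_product (eq_bigr (fun i => Jhat i - Jhat i)); first exact: Rle_refl.
by move=> i _; rewrite (below_Jhat_eq h_in_G h_le).
Qed.

End Bargaining.

Section QuadraticCost.
Variable ell : R -> R.
Hypothesis ell_ge0 : forall y, 0 <= y -> 0 <= ell y.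
Hypothesis ell_increasing : forall y y', y < y' -> ell y < ell y'.
Hypothesis ell_continuous : forall y, continuous ell y.

Lemma quadratic_cost_continuous x y :
  continuous (fun p : R * R => fst p * fst p + fst p * ell (snd p)) (x, y).
Proof.
apply: continuous_plus; first by apply: continuous_mult; apply: continuous_fst.
apply: continuous_mult; first exact: continuous_fst.
by apply: continuous_comp; [apply: continuous_snd | apply: ell_continuous].
Qed.

Lemma quadratic_cost_derivative y :
  has_derivative_on_nonneg (fun x => x * x + x * ell y) (fun x => 2 * x + ell y).
Proof.
move=> x _.
apply: (filterlim_within_ext _ (fun h => 2 * x + ell y + h)).
  by move=> h [h_neq0 _]; field.
apply: filterlim_filter_le_1; first exact: filter_le_within.
have : continuous (fun h => 2 * x + ell y + h) 0.
  by apply: continuous_plus; [apply: continuous_const | apply: continuous_id].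
by rewrite /continuous Rplus_0_r.
Qed.

Lemma quadratic_cost_convex y a b t : 0 <= t <= 1 ->
  let J x := x * x + x * ell y in
  J ((1 - t) * a + t * b) <= (1 - t) * J a + t * J b.
Proof.
move=> t01 /=.
have : 0 <= t * (1 - t) * ((a - b) * (a - b)).
  by apply: Rmult_le_pos; [apply: Rmult_le_pos | apply: Rle_0_sqr]; lra.
nra.
Qed.

Lemma quadratic_cost_standard :
  standard_link_cost (fun x y => x * x + x * ell y).
Proof.
have ell_mono y y' : y <= y' -> ell y <= ell y'.
  by case=> [/ell_increasing/Rlt_le | ->] //; apply: Rle_refl.
split; [by move=> x y x_ge0 y_ge0; have := ell_ge0 y_ge0; nra |].
split; [move=> x y _ _; apply: filterlim_filter_le_1;
        [exact: filter_le_within | exact: quadratic_cost_continuous] |].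
split; [by move=> x x' y x_ge0 x_le y_ge0; have := ell_ge0 y_ge0; nra |].
split; [by move=> x y y' x_ge0 _ /ell_mono; nra |].
split; [by move=> y a b t _ _ _; exact: quadratic_cost_convex |].
exists (fun x y => 2 * x + ell y); split; [move=> y _; split |].
- exact: quadratic_cost_derivative.
- move=> x _; apply: filterlim_filter_le_1; first exact: filter_le_within.
  apply: continuous_plus; last exact: continuous_const.
  by apply: continuous_mult; [apply: continuous_const | apply: continuous_id].
- by split=> [x x' y _ | x y y' _ _ /ell_increasing]; lra.
Qed.

End QuadraticCost.

Definition pos_part (t : R) : R := (t + Rabs t) / 2.

Lemma pos_part_ge0 t : 0 <= pos_part t.
Proof. by rewrite /pos_part; have := Rle_abs (- t); rewrite Rabs_Ropp; lra. Qed.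

Lemma pos_part_ge t : t <= pos_part t.
Proof. by rewrite /pos_part; have := Rle_abs t; lra. Qed.

Lemma pos_part_nonpos t : t <= 0 -> pos_part t = 0.
Proof. by move=> t_le0; rewrite /pos_part Rabs_left1 //; lra. Qed.

Lemma pos_part_nonneg t : 0 <= t -> pos_part t = t.
Proof. by move=> t_ge0; rewrite /pos_part Rabs_pos_eq //; lra. Qed.

Lemma pos_part_mono t t' : t <= t' -> pos_part t <= pos_part t'.
Proof.
move=> le_tt'; case: (Rle_dec t 0) => [t_le0 | /Rnot_le_lt t_gt0].
  by rewrite (pos_part_nonpos t_le0); apply: pos_part_ge0.
by rewrite !pos_part_nonneg; lra.
Qed.

Lemma pos_part_continuous t : continuous pos_part t.
Proof.
apply: continuous_mult; last exact: continuous_const.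
by apply: continuous_plus; [apply: continuous_id | apply: continuous_Rabs].
Qed.

Definition latency (c m y : R) : R := c + y + m * pos_part (y - 1).

Definition link_cost (c m : R) : R -> R -> R := fun x y => x * x + x * latency c m y.

Lemma link_cost_standard c m : 0 <= c -> 0 <= m -> standard_link_cost (link_cost c m).
Proof.
move=> c_ge0 m_ge0; apply: quadratic_cost_standard.
- by move=> y y_ge0; rewrite /latency; have := pos_part_ge0 (y - 1); nra.
- move=> y y' lt_yy'; rewrite /latency.
  have := pos_part_mono (Rlt_le (y - 1) (y' - 1) ltac:(lra)); nra.
- move=> y; rewrite /latency.
  apply: continuous_plus.
    by apply: continuous_plus; [apply: continuous_const | apply: continuous_id].
  apply: continuous_mult; first exact: continuous_const.
  apply: continuous_comp; last exact: pos_part_continuous.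
  by apply: continuous_plus; [apply: continuous_id | apply: continuous_const].
Qed.

Definition u0 : 'I_2 := ord0.
Definition u1 : 'I_2 := ord_max.

Lemma rsum_ord2 (F : 'I_2 -> R) : \rsum_(i < 2) F i = F u0 + F u1.
Proof. by rewrite big_ord_recl big_ord1; congr (_ + F _); apply: val_inj. Qed.

Lemma ord2P (i : 'I_2) : i = u0 \/ i = u1.
Proof. by case: i => [[|[|//]] i_lt]; [left | right]; apply: val_inj. Qed.

Definition demand : 'I_2 -> R := fun i => if nat_of_ord i == 0%N then 2 else 1.

Definition game_cost (M : R) : 'I_2 -> 'I_2 -> R -> R -> R := fun i l =>
  if nat_of_ord i == 0%N then
    (if nat_of_ord l == 0%N then link_cost 0 0 else link_cost 8 0)
  else (if nat_of_ord l == 0%N then link_cost 0 M else link_cost (M - 2) 0).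

Definition nep_flow : profile 2 2 := fun i l =>
  if nat_of_ord i == 0%N then (if nat_of_ord l == 0%N then 2 else 0)
  else (if nat_of_ord l == 0%N then 0 else 1).

Definition swap_flow : profile 2 2 := fun i l =>
  if nat_of_ord i == 0%N then (if nat_of_ord l == 0%N then 0 else 2)
  else (if nat_of_ord l == 0%N then 1 else 0).

Lemma demand_gt0 i : 0 < demand i.
Proof. by rewrite /demand; case: (_ == _); lra. Qed.

Lemma feasible2P (f : profile 2 2) : feasible demand f ->
  [/\ 0 <= f u0 u0, 0 <= f u1 u0, f u0 u1 = 2 - f u0 u0 & f u1 u1 = 1 - f u1 u0]
  /\ f u0 u0 <= 2 /\ f u1 u0 <= 1.
Proof.
move=> [f_ge0 f_sum]; have := f_sum u0; have := f_sum u1.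
rewrite !rsum_ord2 /demand /= => sum1 sum0.
have := f_ge0 u0 u1; have := f_ge0 u1 u1.
by split; [split; auto; lra | lra].
Qed.

Lemma nep_flow_feasible : feasible demand nep_flow.
Proof.
split=> [i l | i]; rewrite /nep_flow; last rewrite rsum_ord2 /demand /=;
  by repeat case: (_ == _); lra.
Qed.

Lemma swap_flow_feasible : feasible demand swap_flow.
Proof.
split=> [i l | i]; rewrite /swap_flow; last rewrite rsum_ord2 /demand /=;
  by repeat case: (_ == _); lra.
Qed.

Section Game.
Variable M : R.

Lemma user0_cost (f : profile 2 2) : user_cost (game_cost M) f u0 =
  link_cost 0 0 (f u0 u0) (f u0 u0 + f u1 u0) + link_cost 8 0 (f u0 u1) (f u0 u1 + f u1 u1).
Proof. by rewrite /user_cost /link_flow !rsum_ord2. Qed.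

Lemma user1_cost (f : profile 2 2) : user_cost (game_cost M) f u1 =
  link_cost 0 M (f u1 u0) (f u0 u0 + f u1 u0) + link_cost (M - 2) 0 (f u1 u1) (f u0 u1 + f u1 u1).
Proof. by rewrite /user_cost /link_flow !rsum_ord2. Qed.

Lemma user0_cost_feasible (f : profile 2 2) : feasible demand f ->
  user_cost (game_cost M) f u0 =
  8 + 4 * (f u0 u0 - 2) * (f u0 u0 - 2) + f u0 u0 * f u1 u0 + f u0 u1 * f u1 u1.
Proof.
move=> /feasible2P [[_ _ z_eq w_eq] _].
by rewrite user0_cost z_eq w_eq /link_cost /latency; ring.
Qed.

Lemma user0_cost_ge (f : profile 2 2) : feasible demand f ->
  8 <= user_cost (game_cost M) f u0.
Proof.
move=> f_feas; rewrite user0_cost_feasible //.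
have [[x_ge0 v_ge0 -> ->] [x_le v_le]] := feasible2P f_feas.
by have := Rle_0_sqr (f u0 u0 - 2); rewrite /Rsqr; nra.
Qed.

Lemma user0_cost_eq_min (f : profile 2 2) : feasible demand f ->
  user_cost (game_cost M) f u0 <= 8 -> f u0 u0 = 2 /\ f u1 u0 = 0.
Proof.
move=> f_feas; rewrite user0_cost_feasible //.
have [[x_ge0 v_ge0 -> ->] [x_le v_le]] := feasible2P f_feas => cost_le.
have x2 : f u0 u0 = 2.
  have sq0 : (f u0 u0 - 2) * (f u0 u0 - 2) = 0 by nra.
  by case: (Rmult_integral _ _ sq0); lra.
by split=> //; rewrite x2 in cost_le; nra.
Qed.

Lemma user0_nep_cost : user_cost (game_cost M) nep_flow u0 = 8.
Proof. by rewrite user0_cost /nep_flow /= /link_cost /latency; ring. Qed.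

Lemma user1_cost_at_min (f : profile 2 2) : feasible demand f ->
  f u0 u0 = 2 -> f u1 u0 = 0 -> user_cost (game_cost M) f u1 = M.
Proof.
move=> /feasible2P [[_ _ z_eq w_eq] _] x2 v0.
rewrite user1_cost z_eq w_eq x2 v0 /link_cost /latency.
by rewrite (pos_part_nonneg (t := 2 + 0 - 1)); [ring | lra].
Qed.

Lemma user1_nep_cost : user_cost (game_cost M) nep_flow u1 = M.
Proof. by apply: user1_cost_at_min; first exact: nep_flow_feasible. Qed.

Lemma below_nep_cost_eq h : in_G demand (game_cost M) h ->
  (forall i, h i <= user_cost (game_cost M) nep_flow i) ->
  forall i, h i = user_cost (game_cost M) nep_flow i.
Proof.
move=> [n [p [fs [p_gt0 [p1 [fs_feas h_eq]]]]]] h_le.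
have cost0 := convex_comb_ge_eq p_gt0 p1 (fun m => user0_cost_ge (fs_feas m)).
have {}cost0 m : user_cost (game_cost M) (fs m) u0 = 8.
  by apply: cost0; rewrite -h_eq -user0_nep_cost.
have cost1 m : user_cost (game_cost M) (fs m) u1 = M.
  have [x2 v0] := user0_cost_eq_min (fs_feas m) (Req_le _ _ (cost0 m)).
  exact: user1_cost_at_min.
move=> i; rewrite h_eq; case: (ord2P i) => ->.
  rewrite user0_nep_cost (eq_bigr (fun m => p m * 8)) ?convex_comb_const //.
  by move=> m _; rewrite cost0.
rewrite user1_nep_cost (eq_bigr (fun m => p m * M)) ?convex_comb_const //.
by move=> m _; rewrite cost1.
Qed.

Lemma nep_cost_is_NBS : is_NBS demand (game_cost M)
  (user_cost (game_cost M) nep_flow) (user_cost (game_cost M) nep_flow).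
Proof.
apply: is_NBS_of_below_eq; last exact: below_nep_cost_eq.
by apply: in_G_user_cost; exact: nep_flow_feasible.
Qed.

Lemma nep_cost_not_essential :
  ~ essential demand (game_cost M) (user_cost (game_cost M) nep_flow).
Proof. exact: (not_essential_of_below_eq below_nep_cost_eq u0). Qed.

Lemma nep_sys_cost : sys_cost (game_cost M) nep_flow = 8 + M.
Proof. by rewrite /sys_cost rsum_ord2 user0_nep_cost user1_nep_cost. Qed.

Hypothesis M_ge : 100 <= M.

Lemma game_cost_standard : standard_costs (game_cost M).
Proof.
by move=> i l; rewrite /game_cost; repeat case: (_ == _); apply: link_cost_standard; lra.
Qed.

Lemma nep_flow_is_NEP : is_NEP demand (game_cost M) nep_flow.
Proof.
split=> [|i g g_feas]; first exact: nep_flow_feasible.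
case: (ord2P i) => -> g_eq; first by rewrite user0_nep_cost; apply: user0_cost_ge.
have u0_neq : u0 <> u1 by move/(congr1 val).
have [[_ v_ge0 _ w_eq] [_ v_le]] := feasible2P g_feas.
rewrite user1_nep_cost user1_cost w_eq !(g_eq u0) // /nep_flow /= /link_cost /latency.
rewrite (pos_part_nonneg (t := 2 + g u1 u0 - 1)); last lra.
nra.
Qed.

Lemma social_cost_bound x v k : 0 <= x <= 2 -> 0 <= v <= 1 -> 0 <= k -> x + v - 1 <= k ->
  26 <= 8 + 4 * (x - 2) * (x - 2) + 2 * x * v + 2 * (1 - v) - 2 * x * (1 - v)
        + 2 * v * v + 2 * (1 - v) * (1 - v) + M * v * k + M * (1 - v).
Proof.
move=> x02 v01 k_ge0 k_ge.
have : 0 <= (x - 2) * (x - 2) by nra.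
have : 0 <= x * v by nra.
have : 0 <= (2 - x) * (1 - v) by nra.
have : 0 <= M * v * k by apply: Rmult_le_pos; nra.
(* User 1 either routes at least half of its demand through link 0, and then
   pays the congestion penalty M v k >= M (x + v - 1) / 2, or it pays at
   least M / 2 on link 1. *)
case: (Rle_lt_dec (1 / 2) v) => [v_ge | v_lt].
- have : M / 2 * (x + v - 1) <= M / 2 * k by nra.
  have : 0 <= M * k * (v - 1 / 2) by apply: Rmult_le_pos; [apply: Rmult_le_pos|]; lra.
  have : 0 <= (M - 4) * x by nra.
  by move=> *; nra.
- have : M / 2 <= M * (1 - v) by nra.
  by move=> *; nra.
Qed.

Lemma swap_flow_social_opt :
  is_social_opt demand (game_cost M) swap_flow /\ sys_cost (game_cost M) swap_flow = 26.
Proof.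
have swap_cost : sys_cost (game_cost M) swap_flow = 26.
  rewrite /sys_cost rsum_ord2 user0_cost user1_cost /swap_flow /= /link_cost /latency.
  by rewrite (pos_part_nonpos (t := 0 + 1 - 1)); [ring | lra].
split=> //; split=> [|g g_feas]; first exact: swap_flow_feasible.
have [[x_ge0 v_ge0 z_eq w_eq] [x_le v_le]] := feasible2P g_feas.
rewrite swap_cost /sys_cost rsum_ord2 user0_cost user1_cost z_eq w_eq /link_cost /latency.
set k := pos_part (g u0 u0 + g u1 u0 - 1).
have := social_cost_bound (conj x_ge0 x_le) (conj v_ge0 v_le) (pos_part_ge0 _) (pos_part_ge _).
by rewrite -/k => bound; apply: (Rle_trans _ _ _ bound); right; ring.
Qed.

End Game.

Theorem theorem4p1 :
  (* (1) the bargaining problem need not be essential; NBS = NEP costs *)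
  (exists (N L : nat) (r : 'I_N -> R) (J : 'I_N -> 'I_L -> R -> R -> R)
          (fhat : profile N L),
     (0 < N)%nat /\ (0 < L)%nat /\ (forall i, 0 < r i)%R /\
     standard_costs J /\ is_NEP r J fhat /\
     ~ essential r J (user_cost J fhat) /\
     is_NBS r J (user_cost J fhat) (user_cost J fhat)) /\
  (* (2) PoS (and hence PoA) can be arbitrarily large *)
  (forall K : R, (0 < K)%R ->
     exists (N L : nat) (r : 'I_N -> R) (J : 'I_N -> 'I_L -> R -> R -> R)
            (fhat fstar : profile N L) (gt : 'I_N -> R),
       (0 < N)%nat /\ (0 < L)%nat /\ (forall i, 0 < r i)%R /\
       standard_costs J /\ is_NEP r J fhat /\
       is_NBS r J (user_cost J fhat) gt /\
       is_social_opt r J fstar /\ (0 < sys_cost J fstar)%R /\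
       (K <= (\big[Rplus/0%R]_(i < N) gt i) / sys_cost J fstar)%R /\
       (K <= sys_cost J fhat / sys_cost J fstar)%R).
Proof.
split.
  exists 2%N, 2%N, demand, (game_cost 100), nep_flow.
  do 2 split=> //; split; first exact: demand_gt0.
  split; first by apply: game_cost_standard; lra.
  split; first by apply: nep_flow_is_NEP; lra.
  by split; [exact: nep_cost_not_essential | exact: nep_cost_is_NBS].
move=> K K_gt0; set M := 26 * K + 100.
have M_ge : 100 <= M by rewrite /M; lra.
have [opt opt_cost] := swap_flow_social_opt M_ge.
exists 2%N, 2%N, demand, (game_cost M), nep_flow, swap_flow,
  (user_cost (game_cost M) nep_flow).
do 2 split=> //; split; first exact: demand_gt0.
split; first exact: game_cost_standard.
split; first exact: nep_flow_is_NEP.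
split; first exact: nep_cost_is_NBS.
split=> //; rewrite opt_cost; split; first lra.
rewrite -/(sys_cost (game_cost M) nep_flow) nep_sys_cost /M.
by split; apply: (Rmult_le_reg_r 26); try lra; field_simplify; lra.
Qed.
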